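(* Let $k,h\ge1$ and let $G=\vartheta_{B_k}^{\mathcal B,h}$ be a $k$-molecule. Then (1) the connectivity of $G$ is $k$; (2) $B_k$ is an edge cover set of $G$ of minimum cardinality, so $\mathrm{Cycl}(G)=k$; and (3) $\mathrm{Ent}(G)=k$.
   Context: Graphs are finite and undirected. A graph is $k$-connected if one must remove at least $k$ vertices to disconnect it; the connectivity is the largest such $k$ (by convention the complete graph $K_m$, $m\ge3$, has connectivity $m-1$). $k$-molecule: for $k,h\ge1$, $B_k=\{b_1,\dots,b_k\}$ and a set $\mathcal B$ of edges among vertices of $B_k$, $\vartheta_{B_k}^{\mathcal B,h}$ is the graph with vertex set $B_k\cup\{v_1,\dots,v_h\}$ and edge set $\mathcal B\cup\{v_ib_j:1\le i\le h,1\le j\le k\}$, where it is required that $h\ge k-k'$, $k'$ being the connectivity of the subgraph induced by $B_k$. An edge cover set of $G$ is a set $X\subseteq V_G$ containing at least one endpoint of every edge (i.e. a vertex cover). $\mathrm{Cycl}(G)$ (cyclicity) is the minimum size of a feedback vertex set of the symmetric digraph of $G$ (each edge viewed as two opposite arcs, so each edge forms a directed 2-cycle), which equals the minimum size of an edge cover set. Entanglement: in the game $\mathrm{Ent}(G,k)$ Thief plays against $k$ cops. Initially no cop is placed and Thief picks a vertex. Each round, Cops may do nothing, place a new cop (at most $k$ in total) on Thief's current vertex, or move a placed cop to Thief's current vertex; then Thief must move along an edge to an adjacent vertex not occupied by a cop, and is caught if he cannot. Infinite plays are won by Thief. $\mathrm{Ent}(G)$ is the least $k$ for which Cops have a winning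 strategy. *)

From mathcomp Require Import all_boot.
Set Implicit Arguments. Unset Strict Implicit. Unset Printing Implicit Defensive.

Definition simple_graph (T : finType) (g : rel T) : Prop :=
  symmetric g /\ irreflexive g.

Definition del_rel (T : finType) (g : rel T) (S : {set T}) : rel T :=
  [rel x y | [&& x \notin S, y \notin S & g x y]].

Definition separates (T : finType) (g : rel T) (S : {set T}) : bool :=
  [exists u, exists v, [&& u \notin S, v \notin S & ~~ connect (del_rel g S) u v]].

Definition kconnected (T : finType) (g : rel T) (n : nat) : bool :=
  [forall S : {set T}, (#|S| < n) ==> ~~ separates g S].

(* Connectivity: the largest n such that G is n-connected, with the convention
   that it is at most #|V| - 1 (so that K_m has connectivity m - 1). *)
Definition connectivity (T : finType) (g : rel T) : nat :=
  \max_(n < #|T| | kconnected g n) n.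

Definition edge_cover (T : finType) (g : rel T) (X : {set T}) : bool :=
  [forall x, forall y, g x y ==> (x \in X) || (y \in X)].

(* Directed cycles of a digraph e (a relation); the symmetric digraph of an
   undirected graph g is g itself viewed as a set of arcs, so each edge gives
   the 2-cycle x -> y -> x. *)
Definition has_dcycle (T : finType) (e : rel T) : bool :=
  [exists x, exists y, e x y && connect e y x].

Definition fvs (T : finType) (g : rel T) (X : {set T}) : bool :=
  ~~ has_dcycle (del_rel g X).

Definition Cycl (T : finType) (g : rel T) : nat :=
  #|[arg min_(X < [set: T] | fvs g X) #|X|]|.

(* Cops are indexed by 'I_k; a cop state maps each cop to its vertex, or None if
   it has not been placed yet.  A Cops' move is an option 'I_k: None = do
   nothing; Some i = put cop i on Thief's current vertex (this is "place a new
   cop" if cop i is not placed yet, and "move a placed cop" otherwise). *)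
Definition cop_state (T : finType) (k : nat) := {ffun 'I_k -> option T}.

Definition apply_cop_move (T : finType) (k : nat) (c : cop_state T k)
    (m : option 'I_k) (thief : T) : cop_state T k :=
  match m with
  | None => c
  | Some i => [ffun j => if j == i then Some thief else c j]
  end.

Definition occupied (T : finType) (k : nat) (c : cop_state T k) (v : T) : bool :=
  [exists i, c i == Some v].

(* A Cops strategy sees the whole history; since cop positions are determined
   by the strategy and Thief's positions, the history is the (nonempty)
   sequence of Thief's positions so far. *)
Definition cop_strategy (T : finType) (k : nat) := seq T -> option 'I_k.

Definition prefix (T : finType) (t : nat -> T) (n : nat) : seq T :=
  map t (iota 0 n.+1).

Fixpoint cops_after (T : finType) (k : nat) (s : cop_strategy T k)
    (t : nat -> T) (n : nat) : cop_state T k :=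
  let prev := match n with
              | 0 => [ffun=> None]
              | n'.+1 => cops_after s t n'
              end in
  apply_cop_move prev (s (prefix t n)) (t n).

Definition thief_legal (T : finType) (g : rel T) (k : nat) (s : cop_strategy T k)
    (t : nat -> T) (n : nat) : Prop :=
  g (t n) (t n.+1) /\ ~~ occupied (cops_after s t n) (t n.+1).

Definition cops_win (T : finType) (g : rel T) (k : nat) : Prop :=
  exists s : cop_strategy T k,
    forall t : nat -> T, ~ (forall n, thief_legal g s t n).

Definition is_Ent (T : finType) (g : rel T) (e : nat) : Prop :=
  cops_win g e /\ forall j, j < e -> ~ cops_win g j.

(* Vertices: inl i = b_(i+1) in B_k, inr i = v_(i+1). *)
Definition molecule (k h : nat) (bB : rel 'I_k) : rel ('I_k + 'I_h)%type :=
  fun x y =>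
    match x, y with
    | inl i, inl j => bB i j
    | inl _, inr _ => true
    | inr _, inl _ => true
    | inr _, inr _ => false
    end.

Definition Bset (k h : nat) : {set ('I_k + 'I_h)%type} :=
  [set x | if x is inl _ then true else false].
Arguments molecule k h bB : clear implicits.
Arguments Bset k h : clear implicits.

From Pilot Require Import Defs.
From mathcomp Require Import all_boot zify.
Set Implicit Arguments. Unset Strict Implicit. Unset Printing Implicit Defensive.

(* Removing fewer than k vertices always spares some b of B_k, and every
   remaining vertex reaches b: a vertex v_i directly, a vertex of B_k through
   a surviving v_i or, when all of them were removed, inside B_k, which is
   still (k - h)-connected.  Removing B_k isolates the v_i, so the
   connectivity is exactly k.  An edge cover missing some b contains every v_i
   and the complement of an independent set of B_k, which has at most h
   vertices since B_k is (k - h)-connected; hence it has at least k vertices.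
   In the entanglement game k cops win by sending cop i to b_i whenever Thief
   stands there: Thief can never come back to such a vertex, yet every second
   position of his lies in B_k.  Against fewer cops Thief runs forever, since
   every vertex has at least k neighbours. *)

Lemma card_sum_set (A B : finType) (X : {set A + B}) :
  #|X| = #|[set a | inl a \in X]| + #|[set b | inr b \in X]|.
Proof.
rewrite -!sum1_card !(big_mkcond (fun x => x \in _)) big_sumType /=.
by congr (_ + _); apply: eq_bigr => ? _; rewrite inE.
Qed.

Lemma homo_connect (T T' : finType) (e : rel T) (e' : rel T') (f : T -> T') x y :
  {homo f : a b / e a b >-> e' a b} -> connect e x y -> connect e' (f x) (f y).
Proof.
move=> f_homo /connectP[p e_p ->]; apply/connectP.
exists (map f p); first exact: (homo_path f_homo).
by rewrite last_map.
Qed.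

Lemma connect_sink (T : finType) (e : rel T) x y :
  (forall z, ~~ e x z) -> connect e x y -> y = x.
Proof.
by move=> sink /connectP[[|z p] //= /andP[exz _]]; rewrite (negbTE (sink z)) in exz.
Qed.

Section Graphs.
Variables (T : finType) (g : rel T).

Lemma del_rel_sym S : symmetric g -> symmetric (del_rel g S).
Proof. by move=> g_sym x y; rewrite /del_rel /= g_sym andbCA. Qed.

Lemma kconnectedP n :
  reflect (forall S : {set T}, #|S| < n ->
             forall u v, u \notin S -> v \notin S -> connect (del_rel g S) u v)
          (kconnected g n).
Proof.
apply: (iffP forallP) => [conn S ltSn u v uS vS | conn S]; last first.
  apply/implyP => /conn conn_S; apply/existsPn => u; apply/existsPn => v.
  by apply/negP => /and3P[uS vS]; rewrite conn_S.
move: (conn S); rewrite ltSn => /existsPn/(_ u)/existsPn/(_ v).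
by rewrite uS vS negbK.
Qed.

Lemma kconnectedW n m : m <= n -> kconnected g n -> kconnected g m.
Proof.
move=> le_mn /kconnectedP conn; apply/kconnectedP => S ltSm.
exact/conn/(leq_trans ltSm).
Qed.

Lemma kconnected_isolated n (S : {set T}) u v :
  kconnected g n -> u \notin S -> v \notin S -> u != v ->
  (forall y, y \notin S -> ~~ g u y) -> n <= #|S|.
Proof.
move=> /kconnectedP conn uS vS neq_uv u_isolated; rewrite leqNgt; apply/negP.
move=> /conn/(_ u v uS vS)/connect_sink vu; rewrite vu ?eqxx // in neq_uv.
by move=> y; apply/negP => /and3P[_ /u_isolated/negP].
Qed.

Lemma kconnected_degree n x : irreflexive g -> kconnected g n -> n < #|T| ->
  n <= #|[set y | g x y]|.
Proof.
move=> g_irr conn ltnT; set N := [set y | g x y].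
have xN : x \notin N by rewrite inE g_irr.
have [/subset_leq_card|/subsetPn[u _]] := boolP ([set: T] \subset x |: N).
  by rewrite cardsT cardsU1 xN; lia.
rewrite in_setU1 negb_or => /andP[ux uN].
by apply: (kconnected_isolated conn xN uN); rewrite 1?eq_sym // => y; rewrite inE.
Qed.

Lemma kconnected_stable n (I : {set T}) : kconnected g n ->
  {in I &, forall x y, ~~ g x y} -> 1 < #|I| -> n + #|I| <= #|T|.
Proof.
move=> conn I_stable /card_gt1P[x [y [xI yI neq_xy]]].
have : n <= #|~: I|.
  apply: (kconnected_isolated conn _ _ neq_xy); rewrite ?inE ?negbK //.
  by move=> z; rewrite inE negbK => /(I_stable x z xI).
by rewrite cardsCs setCK; have := max_card I; lia.
Qed.

Lemma kconnected_connectivity : 0 < #|T| -> kconnected g (connectivity g).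
Proof.
move=> T_gt0; rewrite /connectivity.
have : 0 < #|[pred n : 'I_#|T| | kconnected g n]|.
  by apply/card_gt0P; exists (Ordinal T_gt0); rewrite inE; apply/kconnectedP.
by case/(eq_bigmax_cond (fun n : 'I_#|T| => nat_of_ord n)) => n + ->; rewrite inE.
Qed.

Lemma connectivity_eq c : kconnected g c -> c < #|T| ->
  (c.+1 < #|T| -> ~~ kconnected g c.+1) -> connectivity g = c.
Proof.
move=> conn_c ltcT not_conn; apply/eqP; rewrite eqn_leq; apply/andP; split.
  apply/bigmax_leqP => n conn_n; rewrite leqNgt; apply/negP => ltcn.
  by move: (not_conn (leq_ltn_trans ltcn (ltn_ord n))); rewrite (kconnectedW ltcn conn_n).
exact: (@leq_bigmax_cond _ _ (fun n : 'I_#|T| => nat_of_ord n) (Ordinal ltcT)).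
Qed.

Lemma edge_coverP (X : {set T}) :
  reflect (forall x y, g x y -> (x \in X) || (y \in X)) (edge_cover g X).
Proof.
apply: (iffP forallP) => [cover x y | cover x]; last first.
  by apply/forallP => y; apply/implyP/cover.
by move/forallP/(_ y)/implyP: (cover x).
Qed.

Lemma fvs_edge_cover X : symmetric g -> fvs g X = edge_cover g X.
Proof.
move=> g_sym; apply/idP/edge_coverP => [no_cycle x y gxy | cover].
  apply/negPn/negP; rewrite negb_or => /andP[xX yX]; case/negP: no_cycle.
  apply/existsP; exists x; apply/existsP; exists y.
  by rewrite /del_rel /= xX yX gxy connect1 //= xX yX g_sym.
apply/existsPn => x; apply/existsPn => y; apply/negP => /andP[/and3P[xX yX gxy] _].
by move: (cover x y gxy); rewrite (negbTE xX) (negbTE yX).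
Qed.

Lemma Cycl_edge_cover X : symmetric g -> edge_cover g X ->
  (forall Y, edge_cover g Y -> #|X| <= #|Y|) -> Cycl g = #|X|.
Proof.
move=> g_sym coverX minX; rewrite /Cycl.
have fvsT : fvs g [set: T].
  by rewrite fvs_edge_cover //; apply/edge_coverP => x y; rewrite inE.
case: (arg_minnP (fun Y : {set T} => #|Y|) fvsT) => Y fvsY minY.
apply/eqP; rewrite eqn_leq minY ?fvs_edge_cover //=.
by apply: minX; rewrite -fvs_edge_cover.
Qed.

End Graphs.

Section Entanglement.
Variables (T : finType) (g : rel T).

Lemma last_prefix (t : nat -> T) n x : last x (Defs.prefix t n) = t n.
Proof.
by rewrite -nth_last /Defs.prefix size_map size_iota (nth_map 0) ?size_iota ?nth_iota.
Qed.

Lemma apply_cop_moveE k (c : cop_state T k) m v i :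
  apply_cop_move c m v i = if m == Some i then Some v else c i.
Proof. by case: m => [j|] //=; rewrite ffunE eq_sym. Qed.

Lemma cops_afterE k (s : cop_strategy T k) t n i :
  cops_after s t n i = if s (Defs.prefix t n) == Some i then Some (t n)
                       else if n is n'.+1 then cops_after s t n' i else None.
Proof. by case: n => [|n]; rewrite [LHS]apply_cop_moveE ?ffunE. Qed.

Lemma cops_after_ext k (s : cop_strategy T k) t t' n :
  (forall m, m <= n -> t m = t' m) -> cops_after s t n = cops_after s t' n.
Proof.
have prefix_ext m :
    (forall i, i <= m -> t i = t' i) -> Defs.prefix t m = Defs.prefix t' m.
  by move=> tt'; apply/eq_in_map => i; rewrite mem_iota ltnS => /andP[_ /tt'].
elim: n => [|n IHn] tt' /=; rewrite prefix_ext // tt' //.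
by rewrite IHn // => m le_mn; apply/tt'/ltnW.
Qed.

Lemma card_occupied k (c : cop_state T k) : #|[set y | occupied c y]| <= k.
Proof.
have [->|[x0 _]] := set_0Vmem [set y | occupied c y]; first by rewrite cards0.
have sub : [set y | occupied c y] \subset [set odflt x0 (c i) | i : 'I_k].
  apply/subsetP => y; rewrite inE => /existsP[i /eqP ci].
  by apply/imsetP; exists i; rewrite ?ci.
rewrite (leq_trans (subset_leq_card sub)) //.
by rewrite (leq_trans (leq_imset_card _ _)) ?card_ord.
Qed.

Lemma free_neighbour k (c : cop_state T k) x :
  k < #|[set y | g x y]| -> exists2 y, g x y & ~~ occupied c y.
Proof.
move=> lt_k_deg; have /subsetPn[y] : ~~ ([set y | g x y] \subset [set y | occupied c y]).
  by apply/negP => /subset_leq_card; have := card_occupied c; lia.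
by rewrite !inE; exists y.
Qed.

Lemma thief_escapes k (x0 : T) :
  (forall x, k < #|[set y | g x y]|) -> ~ cops_win g k.
Proof.
move=> deg_gt [s s_wins].
pose cops p := cops_after s (nth x0 p) (size p).-1.
pose next p := odflt x0 [pick y | g (last x0 p) y && ~~ occupied (cops p) y].
pose fix hist n := if n is n'.+1 then rcons (hist n') (next (hist n')) else [:: x0].
pose t n := last x0 (hist n).
have size_hist n : size (hist n) = n.+1 by elim: n => //= n IHn; rewrite size_rcons IHn.
have nth_hist n m : m <= n -> nth x0 (hist n) m = t m.
  elim: n => [|n IHn]; first by rewrite leqn0 => /eqP->.
  rewrite leq_eqVlt => /predU1P[->|].
    by rewrite /t (last_nth x0) /= size_rcons size_hist.
  by rewrite ltnS => le_mn /=; rewrite nth_rcons size_hist ltnS le_mn IHn.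
apply: (s_wins t) => n; rewrite /thief_legal.
have -> : t n.+1 = next (hist n) by rewrite /t /= last_rcons.
have <- : cops (hist n) = cops_after s t n.
  by rewrite /cops size_hist; apply: cops_after_ext => m; apply: nth_hist.
rewrite /next; case: pickP => [y /andP[]|no_free] //.
have [y gy free_y] := free_neighbour (cops (hist n)) (deg_gt (t n)).
by move: (no_free y); rewrite gy free_y.
Qed.

Section LabelStrategy.
Variables (k : nat) (lab : T -> option 'I_k).
Hypothesis lab_inj : forall x y i, lab x = Some i -> lab y = Some i -> x = y.
Hypothesis lab_cover : forall x y, g x y -> (lab x != None) || (lab y != None).

Definition label_strategy : cop_strategy T k :=
  fun p => if p is x :: _ then lab (last x p) else None.

Lemma label_strategy_prefix t n : label_strategy (Defs.prefix t n) = lab (t n).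
Proof. by rewrite -(last_prefix t n (t 0)). Qed.

Lemma cop_stays t m n x i : m <= n -> t m = x -> lab x = Some i ->
  cops_after label_strategy t n i = Some x.
Proof.
move=> le_mn tm lab_x; elim: n le_mn => [|n IHn];
  rewrite cops_afterE label_strategy_prefix.
  by rewrite leqn0 => /eqP m0; rewrite -m0 tm lab_x eqxx.
rewrite leq_eqVlt => /predU1P[<-|]; first by rewrite tm lab_x eqxx.
by move=> /IHn ->; case: eqP => // /(lab_inj lab_x) ->.
Qed.

Lemma label_strategy_wins : cops_win g k.
Proof.
exists label_strategy => t legal.
have no_return m1 m2 i : m1 < m2 -> lab (t m1) = Some i -> t m2 != t m1.
  case: m2 => // n; rewrite ltnS => le_m1n lab_m1; apply/eqP => tm.
  case: (legal n) => _ /existsP; apply; exists i.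
  by rewrite (cop_stays le_m1n erefl lab_m1) tm.
pose tau m := if lab (t m.*2) is Some _ then m.*2 else m.*2.+1.
have tau_bounds m : m.*2 <= tau m <= m.*2.+1.
  by rewrite /tau; case: (lab _) => [_|]; rewrite leqnn ?leqnSn.
have lab_tau m : lab (t (tau m)) != None.
  rewrite /tau; case E: (lab (t m.*2)) => [i|]; first by rewrite E.
  by have := lab_cover (proj1 (legal m.*2)); rewrite E.
pose f (m : 'I_k.+1) := lab (t (tau m)).
have f_inj : injective f.
  move=> m1 m2 f12; have tau12 : tau m1 = tau m2.
    have [i lab1] : exists i, lab (t (tau m1)) = Some i.
      by move: (lab_tau m1); case: (lab _) => // i _; exists i.
    have t12 : t (tau m2) = t (tau m1) by exact: lab_inj (etrans (esym f12) lab1) lab1.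
    case: (ltngtP (tau m1) (tau m2)) => // lt12.
      by move: (no_return _ _ _ lt12 lab1); rewrite t12 eqxx.
    by move: (no_return _ _ i lt12); rewrite t12 eqxx lab1 => /(_ erefl).
  by apply/val_inj; move: (tau_bounds m1) (tau_bounds m2); rewrite tau12 /=; lia.
have : f @: [set: 'I_k.+1] \subset ~: [set None].
  by apply/subsetP => _ /imsetP[m _ ->]; rewrite !inE lab_tau.
by move/subset_leq_card; rewrite card_imset // cardsT cardsC1 card_option !card_ord ltnn.
Qed.

End LabelStrategy.
End Entanglement.

Section Molecule.
Variables (k h : nat) (bB : rel 'I_k).
Hypotheses (k_gt0 : 0 < k) (h_gt0 : 0 < h) (bB_simple : simple_graph bB)
  (h_ge : k - connectivity bB <= h).
Local Notation G := (molecule k h bB).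

Lemma molecule_sym : symmetric G.
Proof. by case: bB_simple => bB_sym _ [x|x] [y|y] //=; rewrite bB_sym. Qed.

Lemma card_molecule : #|{: 'I_k + 'I_h}| = k + h.
Proof. by rewrite card_sum !card_ord. Qed.

Lemma card_Bset : #|Bset k h| = k.
Proof.
rewrite card_sum_set.
have -> : [set a | inl a \in Bset k h] = [set: 'I_k] by apply/setP => a; rewrite !inE.
have -> : [set b | inr b \in Bset k h] = set0 by apply/setP => b; rewrite !inE.
by rewrite cardsT cards0 card_ord addn0.
Qed.

Lemma base_kconnected : kconnected bB (k - h).
Proof.
have le_conn : k - h <= connectivity bB by move: h_ge; lia.
by apply: kconnectedW le_conn (kconnected_connectivity bB _); rewrite card_ord.
Qed.

Lemma base_degree b : k - h <= #|[set l | bB b l]|.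
Proof.
apply: kconnected_degree base_kconnected _; first by case: bB_simple.
by rewrite card_ord; lia.
Qed.

Lemma base_stable_card (I : {set 'I_k}) :
  {in I &, forall i j, ~~ bB i j} -> #|I| <= h.
Proof.
move=> I_stable; have [le_I1|lt1I] := leqP #|I| 1; first exact: leq_trans le_I1 h_gt0.
have := kconnected_stable base_kconnected I_stable lt1I; rewrite card_ord.
set c := #|I|; lia.
Qed.

Lemma molecule_degree x : k <= #|[set y | G x y]|.
Proof.
rewrite card_sum_set; case: x => [b|w].
  have -> : [set y | inr y \in [set y | G (inl b) y]] = [set: 'I_h].
    by apply/setP => y; rewrite !inE.
  have -> : [set l | inl l \in [set y | G (inl b) y]] = [set l | bB b l].
    by apply/setP => l; rewrite !inE.
  by have := base_degree b; rewrite cardsT card_ord; lia.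
have -> : [set l | inl l \in [set y | G (inr w) y]] = [set: 'I_k].
  by apply/setP => l; rewrite !inE.
by rewrite cardsT card_ord leq_addr.
Qed.

Lemma molecule_kconnected : kconnected G k.
Proof.
apply/kconnectedP => S ltSk.
pose Sl := [set i | inl i \in S]; pose Sr := [set w | inr w \in S].
have cardS : #|S| = #|Sl| + #|Sr| by exact: card_sum_set.
have /card_gt0P[b0] : 0 < #|~: Sl| by rewrite cardsCs setCK card_ord; lia.
rewrite !inE => b0S.
have to_b0 u : u \notin S -> connect (del_rel G S) u (inl b0).
  case: u => [b|w] uS; last by apply: connect1; rewrite /del_rel /= uS b0S.
  have [w /= wS|all_inr] := pickP [pred w | inr w \notin S].
    apply: (connect_trans (y := inr w)); apply: connect1.
      by rewrite /del_rel /= uS wS.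
    by rewrite /del_rel /= wS b0S.
  have ltSl : #|Sl| < k - h.
    have Sr_full : Sr = [set: 'I_h].
      by apply/setP => w; rewrite !inE; move/negbFE: (all_inr w).
    by move: ltSk; rewrite cardS Sr_full cardsT card_ord; lia.
  move/kconnectedP: base_kconnected => /(_ Sl ltSl b b0); rewrite !inE uS b0S.
  by move=> /(_ isT isT); apply: homo_connect => i j /=; rewrite /del_rel /= !inE.
move=> u v uS vS; apply: connect_trans (to_b0 u uS) _.
by rewrite (sym_connect_sym (del_rel_sym _ molecule_sym)) to_b0.
Qed.

Lemma molecule_connectivity : connectivity G = k.
Proof.
apply: connectivity_eq molecule_kconnected _ _; rewrite card_molecule; first lia.
move=> ltkT; have lt1h : 1 < h by lia.
apply/negP => conn; suff : k.+1 <= #|Bset k h| by rewrite card_Bset ltnn.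
apply: (kconnected_isolated (u := inr (Ordinal h_gt0)) (v := inr (Ordinal lt1h)) conn);
  rewrite ?inE //.
by case=> [b|w]; rewrite inE.
Qed.

Lemma Bset_edge_cover : edge_cover G (Bset k h).
Proof. by apply/edge_coverP => -[b|w] [c|z]; rewrite !inE. Qed.

Lemma molecule_edge_cover_card X : edge_cover G X -> k <= #|X|.
Proof.
move/edge_coverP => covers; rewrite card_sum_set.
have [b /= bX|allB] := pickP [pred b | inl b \notin X]; last first.
  have -> : [set b | inl b \in X] = [set: 'I_k].
    by apply/setP => b; rewrite !inE; move/negbFE: (allB b).
  by rewrite cardsT card_ord leq_addr.
pose I := [set b | inl b \notin X].
have I_stable : {in I &, forall i j, ~~ bB i j}.
  move=> i j; rewrite !inE => iX jX; apply/negP => bij.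
  by move: (covers (inl i) (inl j) bij); rewrite (negbTE iX) (negbTE jX).
have -> : [set w | inr w \in X] = [set: 'I_h].
  by apply/setP => w; move: (covers (inl b) (inr w) isT); rewrite !inE (negbTE bX).
have -> : [set b | inl b \in X] = ~: I by apply/setP => i; rewrite !inE negbK.
have := base_stable_card I_stable; rewrite cardsT (cardsCs (~: I)) setCK !card_ord.
set c := #|I|; lia.
Qed.

Lemma molecule_Cycl : Cycl G = k.
Proof.
rewrite -[RHS]card_Bset; apply: Cycl_edge_cover molecule_sym Bset_edge_cover _.
by move=> X /molecule_edge_cover_card; rewrite card_Bset.
Qed.

Lemma molecule_Ent : is_Ent G k.
Proof.
split.
  pose lab (x : 'I_k + 'I_h) := if x is inl i then Some i else None.
  apply: (label_strategy_wins (lab := lab)); first by move=> [i|w] [j|z] l //= [->] [->].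
  by move=> [i|w] [j|z].
move=> j ltjk; apply: (thief_escapes (inl (Ordinal k_gt0))) => x.
exact: leq_trans ltjk (molecule_degree x).
Qed.

End Molecule.

Theorem mainTheorem5 (k h : nat) (bB : rel 'I_k) :
  1 <= k -> 1 <= h ->
  simple_graph bB ->
  k - connectivity bB <= h ->
  [/\ connectivity (molecule k h bB) = k,
      edge_cover (molecule k h bB) (Bset k h)
      /\ (forall X, edge_cover (molecule k h bB) X -> #|Bset k h| <= #|X|)
      /\ Cycl (molecule k h bB) = k
    & is_Ent (molecule k h bB) k].
Proof.
move=> k_gt0 h_gt0 bB_simple h_ge; split.
- exact: molecule_connectivity.
- split; first exact: Bset_edge_cover.
  split; last exact: molecule_Cycl.
  by move=> X /molecule_edge_cover_card; rewrite card_Bset; apply.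
- exact: molecule_Ent.
Qed.
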